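(* Let $M,M'\in\mathrm{GL}(2,\mathbb{Z})$ be hyperbolic (no eigenvalue on the unit circle) and suppose they have the same fixed point counts, i.e. $a_m(M)=a_m(M')$ for all $m\in\mathbb{N}$, where $a_m(M)=\#\{x\in\mathbb{T}^2: M^m x=x\ (\mathrm{mod}\ 1)\}$. Then $\zeta_M(t)=\zeta_{M'}(t)$, where $\zeta_M(t)=\exp\big(\sum_{m\ge1}\frac{a_m(M)}{m}t^m\big)$. This implies $\det(M')=\det(M)$ and either $\mathrm{trace}(M')=\mathrm{trace}(M)$, or $\mathrm{trace}(M')=-\mathrm{trace}(M)$ together with $\det(M)=-1$.
   Context: $\mathbb{T}^2=\mathbb{R}^2/\mathbb{Z}^2$, with integer matrices acting by matrix multiplication mod $1$. *)

From HB Require Import structures.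
From mathcomp Require Import all_boot all_order all_algebra all_field.
From mathcomp Require Import finmap.
From mathcomp Require Import all_classical all_reals all_analysis.
Set Implicit Arguments. Unset Strict Implicit. Unset Printing Implicit Defensive.
Import Order.TTheory GRing.Theory Num.Theory.
Local Open Scope classical_set_scope.
Local Open Scope ring_scope.

Definition GL2Z (M : 'M[int]_2) : Prop := M \in unitmx.

Definition hyperbolic (M : 'M[int]_2) : Prop :=
  forall z : algC, eigenvalue (map_mx (fun k : int => k%:~R) M) z -> `|z| != 1.

(* Points of T^2 = R^2/Z^2, represented by column vectors with coordinates in
   [0,1); the set of x with M^m x = x (mod 1). *)
Definition fixset (R : realType) (M : 'M[int]_2) (m : nat) : set 'cV[R]_2 :=
  [set x : 'cV[R]_2 | (forall i, 0 <= x i 0 < 1) /\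
     exists k : 'cV[int]_2,
       map_mx (fun z : int => z%:~R) (M ^+ m) *m x - x = map_mx (fun z : int => z%:~R) k].

(* a_m(M) = #{x in T^2 : M^m x = x mod 1} (finite for hyperbolic M;
   fset_set returns the empty set, i.e. count 0, for infinite sets). *)
Arguments fixset : clear implicits.

Definition fixcount (R : realType) (M : 'M[int]_2) (m : nat) : nat :=
  #|` fset_set (fixset R M m)|%fset.

Arguments fixcount : clear implicits.

Definition zeta (R : realType) (M : 'M[int]_2) (t : R) : R :=
  expR (limn (fun n : nat => \sum_(1 <= m < n) ((fixcount R M m)%:R / m%:R * t ^+ m))).
Arguments zeta : clear implicits.

From Pilot Require Import Defs.
From HB Require Import structures.
From mathcomp Require Import all_boot all_order all_algebra all_field.
From mathcomp Require Import finmap.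
From mathcomp Require Import all_classical all_reals all_analysis.
From mathcomp Require Import ring lra zify.
Import Order.TTheory GRing.Theory Num.Theory.
Local Open Scope classical_set_scope.
Local Open Scope ring_scope.

(** The points [x] of the torus [T^n] with [A x = 0] number [|det A|] when
  [det A != 0]: in the Smith normal form [A = L D Q] the unimodular factors act
  bijectively on [T^n], and for diagonal [D] the solutions form a grid of
  [|d_1| ... |d_n|] points.  Hence [a_m(M) = |det (M^m - 1)|], and for [2 x 2]
  matrices [a_1 = |det M - tr M + 1|] and [a_2 = |det (M - 1) det (M + 1)|].
  Under the constraints that hyperbolicity puts on [tr M], [a_1] and [a_2] pin
  down [det M], and [tr M] up to a sign that can only flip when [det M = -1]. *)

Section Fract.
Variable R : archiRealFieldType.

Definition fract (x : R) : R := x - (Num.floor x)%:~R.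

Lemma fract_ge0_lt1 x : 0 <= fract x < 1.
Proof.
rewrite /fract subr_ge0 floor_le /= ltrBlDr.
by have := floorD1_gt x; rewrite intrD addrC.
Qed.

Lemma subr_fract_int x : x - fract x \is a Num.int.
Proof. by rewrite /fract opprB addrC subrK intr_int. Qed.

Lemma fract_unique x y : 0 <= x < 1 -> x - y \is a Num.int -> fract y = x.
Proof.
move=> /andP[x0 x1] /intrP[z ez].
have -> : y = x - z%:~R by rewrite -ez opprB addrC subrK.
rewrite /fract; suff -> : Num.floor (x - z%:~R) = - z by rewrite mulrNz opprK subrK.
by apply: floor_def; rewrite intrD mulrNz; apply/andP; split; lra.
Qed.

End Fract.

Section UnitBox.
Variables (R : archiRealFieldType) (n : nat).
Implicit Types (v w : 'cV[R]_n) (A : 'M[int]_n).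

Definition in_unit_box v := forall i, 0 <= v i 0 < 1.

Lemma mxOver_intP v :
  (exists k : 'cV[int]_n, v = map_mx intr k) <-> v \is a mxOver Num.int.
Proof.
split=> [[k ->]|/mxOverP vZ]; first by apply/mxOverP => i j; rewrite mxE intr_int.
exists (map_mx Num.floor v); apply/matrixP => i j.
by rewrite !mxE; have /intrP[z ->] := vZ i j; rewrite intrKfloor.
Qed.

Lemma mxOverB_int v w : v \is a mxOver Num.int -> w \is a mxOver Num.int ->
  v - w \is a mxOver Num.int.
Proof.
by move=> /mxOverP vZ /mxOverP wZ; apply/mxOverP => i j; rewrite !mxE rpredB.
Qed.

Lemma mxOverN_int v : (- v \is a mxOver Num.int) = (v \is a mxOver Num.int).
Proof.
by apply/mxOverP/mxOverP => vZ i j; move: (vZ i j); rewrite mxE rpredN.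
Qed.

Lemma mxOverD_int v w : v \is a mxOver Num.int -> w \is a mxOver Num.int ->
  v + w \is a mxOver Num.int.
Proof.
by move=> /mxOverP vZ /mxOverP wZ; apply/mxOverP => i j; rewrite !mxE rpredD.
Qed.

Lemma mxOverM_int A v :
  v \is a mxOver Num.int -> map_mx intr A *m v \is a mxOver Num.int.
Proof. by apply: mxOverM; apply/mxOverP => i j; rewrite mxE intr_int. Qed.

Lemma in_unit_box_fract v : in_unit_box (map_mx (@fract R) v).
Proof. by move=> i; rewrite mxE fract_ge0_lt1. Qed.

Lemma subr_fract_mxOver_int v : v - map_mx (@fract R) v \is a mxOver Num.int.
Proof. by apply/mxOverP => i j; rewrite !mxE subr_fract_int. Qed.

Lemma fract_mx_unique {v w} : in_unit_box v -> w - v \is a mxOver Num.int ->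
  map_mx (@fract R) w = v.
Proof.
move=> v01 /mxOverP vwZ; apply/matrixP => i j; rewrite (ord1 j) mxE.
apply: fract_unique; first exact: v01.
by have := vwZ i 0; rewrite !mxE -opprB rpredN.
Qed.

Lemma in_unit_box_eq {v w} : in_unit_box v -> in_unit_box w ->
  v - w \is a mxOver Num.int -> v = w.
Proof.
move=> v01 w01 vwZ; rewrite -(fract_mx_unique w01 vwZ).
symmetry; apply: fract_mx_unique v01 _; rewrite subrr.
by apply/mxOverP => i j; rewrite mxE int_num0.
Qed.

Definition torus_ker A : set 'cV[R]_n :=
  [set v | in_unit_box v /\ map_mx intr A *m v \is a mxOver Num.int].

End UnitBox.

Arguments torus_ker R {n} A.
Arguments in_unit_box {R n} v.
Arguments subr_fract_mxOver_int {R n}.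

Section TorusKernel.
Variables (R : archiRealFieldType) (n : nat).
Implicit Types (A L Q : 'M[int]_n).
Local Notation mxR A := (map_mx (intr : int -> R) A).

Lemma map_mx_intr_mulV {A} : A \in unitmx -> mxR A *m mxR (invmx A) = 1%:M.
Proof. by move=> uA; rewrite -map_mxM mulmxV // map_mx1. Qed.

Lemma map_mx_intr_mulVl {A} : A \in unitmx -> mxR (invmx A) *m mxR A = 1%:M.
Proof. by move=> uA; rewrite -map_mxM mulVmx // map_mx1. Qed.

Lemma torus_ker_mull L A : L \in unitmx -> torus_ker R (L *m A) = torus_ker R A.
Proof.
move=> uL; apply/seteqP; split => v [v01 Av]; split => //.
  have -> : mxR A *m v = mxR (invmx L) *m (mxR (L *m A) *m v).
    by rewrite map_mxM !mulmxA map_mx_intr_mulVl // mul1mx.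
  exact: mxOverM_int.
by rewrite map_mxM -mulmxA mxOverM_int.
Qed.

Lemma torus_ker_mulr A Q : Q \in unitmx ->
  (torus_ker R (A *m Q) #= torus_ker R A)%card.
Proof.
move=> uQ; pose f (v : 'cV[R]_n) := map_mx (@fract R) (mxR (invmx Q) *m v).
have QfZ (v : 'cV[R]_n) : mxR Q *m f v - v \is a mxOver Num.int.
  rewrite -[v in _ - v]mul1mx -(map_mx_intr_mulV uQ) -mulmxA -mulmxBr mxOverM_int //.
  by rewrite -opprB mxOverN_int subr_fract_mxOver_int.
suff -> : torus_ker R (A *m Q) = f @` torus_ker R A.
  apply: inj_card_eq => v w; rewrite !inE => -[v01 _] [w01 _] fvw.
  apply: in_unit_box_eq v01 w01 _.
  have -> : v - w = (mxR Q *m f w - w) - (mxR Q *m f v - v).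
    by rewrite fvw opprB [RHS]addrC addrA subrK.
  exact: mxOverB_int.
apply/seteqP; split => [v [v01 AQv]|_ [v [v01 Av] <-]].
- have QvZ := subr_fract_mxOver_int (mxR Q *m v).
  exists (map_mx (@fract R) (mxR Q *m v)); first split.
  + exact: in_unit_box_fract.
  + have -> : mxR A *m map_mx (@fract R) (mxR Q *m v) =
        mxR (A *m Q) *m v - mxR A *m (mxR Q *m v - map_mx (@fract R) (mxR Q *m v)).
      by rewrite map_mxM -mulmxA mulmxBr opprB addrC subrK.
    by rewrite mxOverB_int // mxOverM_int.
  + apply: fract_mx_unique v01 _.
    rewrite -[v in _ - v]mul1mx -(map_mx_intr_mulVl uQ) -mulmxA -mulmxBr.
    by rewrite mxOverM_int // -opprB mxOverN_int.
- split; first exact: in_unit_box_fract.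
  have -> : mxR (A *m Q) *m f v = mxR A *m v + mxR A *m (mxR Q *m f v - v).
    by rewrite map_mxM -mulmxA mulmxBr addrC subrK.
  by rewrite mxOverD_int // mxOverM_int.
Qed.

End TorusKernel.

Arguments torus_ker_mulr {R n} A {Q}.

Section Diagonal.
Variable R : archiRealFieldType.

Lemma absz_intr (d : int) : (`|d|%N)%:R = `|(d%:~R : R)|.
Proof. by rewrite natr_absz intr_norm. Qed.

Lemma int_mul_absz_fraction (d : int) (k : nat) : d != 0 ->
  (d%:~R : R) * (k%:R / (`|d|%N)%:R) \is a Num.int.
Proof.
move=> d0; have dR0 : (d%:~R : R) != 0 by rewrite intr_eq0.
rewrite absz_intr mulrCA; have [dp|dn] := ltP 0 d.
  by rewrite ger0_norm ?ler0z ?ltW // divff // mulr1 rpred_nat.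
by rewrite ler0_norm ?lerz0 // invrN mulrN divff // mulrN1 rpredN rpred_nat.
Qed.

Lemma fraction_of_int_mul {d : int} {u : R} : d != 0 -> 0 <= u < 1 ->
  d%:~R * u \is a Num.int -> exists k : 'I_(`|d|%N), u = k%:R / (`|d|%N)%:R.
Proof.
move=> d0 /andP[u0 u1] duZ.
have dR : `|d|%N%:R * u \is a Num.int.
  rewrite absz_intr; have [dp|dn] := ltP 0 d; first by rewrite ger0_norm ?ler0z ?ltW.
  by rewrite ler0_norm ?lerz0 // mulNr rpredN.
have dpos : (0 : R) < (`|d|%N)%:R by rewrite ltr0n absz_gt0.
have /natrP[k ek] : `|d|%N%:R * u \is a Num.nat by rewrite natrEint dR mulr_ge0.
have klt : (k < `|d|)%N.
  by rewrite -(ltr_nat R) -ek -[X in _ < X]mulr1 ltr_pM2l.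
by exists (Ordinal klt) => /=; rewrite -ek [_ * u]mulrC mulfK ?gt_eqF.
Qed.

Lemma torus_ker_diag_card n (d : 'I_n -> int) : (forall i, d i != 0) ->
  (torus_ker R (diag_mx (\row_i d i)) #= `I_(\prod_i `|d i|))%card.
Proof.
move=> d0; pose T := {dffun forall i : 'I_n, 'I_(`|d i|%N)}.
have dpos i : (0 : R) < (`|d i|%N)%:R by rewrite ltr0n absz_gt0.
pose g (k : T) : 'cV[R]_n := \col_i ((k i : nat)%:R / (`|d i|%N)%:R).
have ginj : injective g.
  move=> k l /matrixP gkl; apply/ffunP => i; apply: val_inj; apply/eqP.
  move: (gkl i 0); rewrite !mxE => /(mulIf (invr_neq0 (lt0r_neq0 (dpos i))))/eqP.
  by rewrite eqr_nat.
have kerP x : torus_ker R (diag_mx (\row_i d i)) x <->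
    in_unit_box x /\ forall i, (d i)%:~R * x i 0 \is a Num.int.
  rewrite /torus_ker /= map_diag_mx mul_diag_mx; split=> -[x01 xZ]; split => //.
    by move=> i; have := mxOverP xZ i 0; rewrite !mxE.
  by apply/mxOverP => i j; rewrite (ord1 j) !mxE; apply: xZ.
have -> : torus_ker R (diag_mx (\row_i d i)) = [set` [fset g k | k : T]%fset].
  apply/seteqP; split => x; rewrite kerP /=.
  - move=> [x01 xZ]; apply/imfsetP.
    pose k : T := [ffun i => sval (cid (fraction_of_int_mul (d0 i) (x01 i) (xZ i)))].
    exists k => //; apply/matrixP => i j; rewrite (ord1 j) !mxE ffunE.
    by case: cid.
  - case/imfsetP => k _ ->; split => [i|i]; rewrite !mxE; last first.
      exact: int_mul_absz_fraction.
    by rewrite divr_ge0 //= ltr_pdivrMr // mul1r ltr_nat.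
apply/card_eq_fsetP; rewrite card_imfset //= -cardE card_dep_ffun.
by rewrite foldrE big_image; apply: eq_bigr => i _; rewrite card_ord.
Qed.

End Diagonal.

Lemma card_torus_ker (R : archiRealFieldType) n (A : 'M[int]_n) :
  \det A != 0 -> #|` fset_set (torus_ker R A)|%fset = `|\det A|%N.
Proof.
move=> detA; have [L uL [Q uQ [d _ defA]]] := int_Smith_normal_form A.
have diagD : \matrix_(i, j) (d`_i *+ (i == j :> nat)) = diag_mx (\row_i d`_i)
    :> 'M[int]_n.
  by apply/matrixP => i j; rewrite !mxE.
rewrite diagD in defA.
have det_unit (B : 'M[int]_n) : B \in unitmx -> `|\det B|%N = 1%N.
  by rewrite unitmxE => /orP[] /eqP ->.
have detDA : `|\det A|%N = (\prod_(i < n) `|(d`_i)%R|)%N.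
  rewrite defA !det_mulmx !abszM (det_unit L uL) (det_unit Q uQ) mul1n muln1 det_diag.
  rewrite (big_morph absz abszM (erefl : `|1%R|%N = 1%N)).
  by apply: eq_bigr => i _; rewrite mxE.
have d0 (i : 'I_n) : d`_i != 0.
  move: detA; rewrite -absz_eq0 detDA prod_nat_seq_neq0.
  by move=> /allP/(_ i (mem_index_enum i)); rewrite absz_eq0.
rewrite detDA; apply: card_fset_set; rewrite defA -mulmxA torus_ker_mull //.
apply: card_eq_trans (torus_ker_mulr _ uQ) _.
exact: torus_ker_diag_card.
Qed.

(* The possible [(det M, tr M)] of a hyperbolic [M] in GL(2,Z): with [det M = 1]
   the eigenvalues lie on the unit circle when [|tr M| <= 2]; with [det M = -1]
   they are [1] and [-1] when [tr M = 0]. *)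
Definition hyperbolic_det_tr (d t : int) := (d = 1 /\ 2 < `|t|) \/ (d = -1 /\ t != 0).

Lemma hyperbolic_det_tr_pm1 (d t : int) : hyperbolic_det_tr d t ->
  d - t + 1 != 0 /\ d + t + 1 != 0.
Proof. by case=> -[-> ?]; split; lia. Qed.

Lemma hyperbolic_det_tr_inj {d t d' t' : int} :
  hyperbolic_det_tr d t -> hyperbolic_det_tr d' t' ->
  absz (d - t + 1) = absz (d' - t' + 1) ->
  absz ((d - t + 1) * (d + t + 1)) = absz ((d' - t' + 1) * (d' + t' + 1)) ->
  d' = d /\ (t' = t \/ t' = - t /\ d = -1).
Proof. by move=> [[-> ?]|[-> ?]] [[-> ?]|[-> ?]] ? ?; lia. Qed.

Section Mx2.
Variable C : comPzRingType.
Implicit Type B : 'M[C]_2.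

Lemma det_mx2 B : \det B = B 0 0 * B 1 1 - B 0 1 * B 1 0.
Proof.
rewrite (expand_det_row _ 0) !big_ord_recr big_ord0 /= add0r /cofactor.
rewrite !det_mx11 !mxE /=.
have -> : widen_ord (leqnSn 1) ord_max = 0 :> 'I_2 by apply: val_inj.
have -> : lift 0 (0 : 'I_1) = 1 :> 'I_2 by apply: val_inj.
have -> : lift (ord_max : 'I_2) (0 : 'I_1) = 0 :> 'I_2 by apply: val_inj.
have -> : (ord_max : 'I_2) = 1 by apply: val_inj.
by rewrite expr0 expr1; ring.
Qed.

Lemma tr_mx2 B : \tr B = B 0 0 + B 1 1.
Proof.
rewrite /mxtrace !big_ord_recr big_ord0 /= add0r.
by congr (B _ _ + B _ _); apply: val_inj.
Qed.

Lemma det_subr1_mx2 B : \det (B - 1) = \det B - \tr B + 1.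
Proof. by rewrite !det_mx2 tr_mx2 !mxE /=; ring. Qed.

Lemma det_addr1_mx2 B : \det (B + 1) = \det B + \tr B + 1.
Proof. by rewrite !det_mx2 tr_mx2 !mxE /=; ring. Qed.

End Mx2.

Lemma eigenvalue_mx2 (F : fieldType) (B : 'M[F]_2) z :
  z ^+ 2 - \tr B * z + \det B = 0 -> eigenvalue B z.
Proof.
move=> rootz; rewrite eigenvalue_root_char /root horner_coef size_char_poly.
rewrite !big_ord_recr big_ord0 /= add0r.
have /monicP := char_poly_monic B; rewrite lead_coefE size_char_poly /= => ->.
rewrite char_poly_det (char_poly_trace B isT) -rootz expr0 expr1 sqrrN expr1n.
by apply/eqP; ring.
Qed.

Lemma unit_circle_root (t : int) : `|t| <= 2 ->
  exists z : algC, z ^+ 2 - t%:~R * z + 1 = 0 /\ `|z| = 1.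
Proof.
move=> t2; pose tc : algC := t%:~R.
have disc_ge0 : 0 <= 1 - tc ^+ 2 / 4.
  rewrite subr_ge0 ler_pdivrMr ?ltr0n // mul1r /tc -rmorphXn /=.
  by rewrite (ler_int algC _ 4); nia.
pose s := sqrtC (1 - tc ^+ 2 / 4).
have s2 : s ^+ 2 = 1 - tc ^+ 2 / 4 by rewrite sqrtCK.
have sR : s^* = s by apply/CrealP; apply: ger0_real; rewrite sqrtC_ge0.
have ii : 'i * 'i = -1 :> algC by rewrite -expr2 sqrCi.
pose z := tc / 2 + 'i * s.
have zconj : z^* = tc / 2 - 'i * s.
  have c2 : (2 : algC)^-1^* = 2^-1 by rewrite fmorphV rmorph_nat.
  have tR : tc^* = tc by rewrite /tc conj_intr.
  by rewrite /z rmorphD !rmorphM /= conjCi tR sR c2 mulNr.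
exists z; split.
  have -> : z ^+ 2 - tc * z + 1 = ('i * 'i) * s ^+ 2 + (1 - tc ^+ 2 / 4).
    by rewrite /z; field.
  by rewrite ii s2; ring.
have : `|z| ^+ 2 = 1.
  rewrite normCK zconj.
  have -> : z * (tc / 2 - 'i * s) = - ('i * 'i) * s ^+ 2 + tc ^+ 2 / 4.
    by rewrite /z; field.
  by rewrite ii s2; field.
by move/eqP; rewrite sqrp_eq1 // => /eqP.
Qed.

Lemma GL2Z_hyperbolic_det_tr {M : 'M[int]_2} : GL2Z M -> hyperbolic M ->
  hyperbolic_det_tr (\det M) (\tr M).
Proof.
rewrite /GL2Z unitmxE => unitM hypM.
pose MC := map_mx (intr : int -> algC) M.
have trC : \tr MC = (\tr M)%:~R by rewrite !tr_mx2 !mxE intrD.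
have detC : \det MC = (\det M)%:~R by rewrite !det_mx2 !mxE intrB !intrM.
case/orP: unitM => /eqP detM; [left | right]; split => //.
  rewrite ltNge; apply/negP => /unit_circle_root[z [rootz z1]].
  have /hypM : eigenvalue MC z by apply: eigenvalue_mx2; rewrite trC detC detM.
  by rewrite z1 eqxx.
apply/negP => /eqP trM.
have /hypM : eigenvalue MC 1.
  by apply: eigenvalue_mx2; rewrite trC detC detM trM; ring.
by rewrite normr1 eqxx.
Qed.

Lemma fixset_torus_ker (R : realType) (M : 'M[int]_2) m :
  Defs.fixset R M m = torus_ker R (M ^+ m - 1).
Proof.
apply/seteqP; split => x [x01 xfix]; split => //; rewrite -mxOver_intP in xfix *;
  by rewrite map_mxB map_mx1 mulmxBl mul1mx in xfix *.
Qed.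

Lemma fixcount_det (R : realType) (M : 'M[int]_2) m : \det (M ^+ m - 1) != 0 ->
  fixcount R M m = `|\det (M ^+ m - 1)|%N.
Proof. by move=> detM; rewrite /fixcount fixset_torus_ker card_torus_ker. Qed.

Lemma fixcount1_mx2 (R : realType) {M : 'M[int]_2} :
  hyperbolic_det_tr (\det M) (\tr M) -> fixcount R M 1 = absz (\det M - \tr M + 1).
Proof.
by case/hyperbolic_det_tr_pm1 => ? _; rewrite fixcount_det expr1 det_subr1_mx2.
Qed.

Lemma fixcount2_mx2 (R : realType) {M : 'M[int]_2} :
  hyperbolic_det_tr (\det M) (\tr M) ->
  fixcount R M 2 = absz ((\det M - \tr M + 1) * (\det M + \tr M + 1)).
Proof.
case/hyperbolic_det_tr_pm1 => ? ?.
have detM21 : \det (M ^+ 2 - 1) = (\det M - \tr M + 1) * (\det M + \tr M + 1).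
  rewrite -det_subr1_mx2 -det_addr1_mx2 -det_mulmx mulmxE.
  by rewrite mulrDr mulr1 !mulrBl mul1r expr2 addrA subrK.
by rewrite fixcount_det detM21 // mulf_neq0.
Qed.

Lemma eq_zeta (R : realType) (M M' : 'M[int]_2) :
  (forall m : nat, (0 < m)%N -> fixcount R M m = fixcount R M' m) ->
  zeta R M =1 zeta R M'.
Proof.
move=> eq_count t; rewrite /zeta.
suff -> : (fun n => \sum_(1 <= m < n) (fixcount R M m)%:R / m%:R * t ^+ m) =
  (fun n => \sum_(1 <= m < n) (fixcount R M' m)%:R / m%:R * t ^+ m) by [].
apply/funext => n; apply: eq_big_nat => m /andP[m_gt0 _].
by rewrite eq_count.
Qed.

Theorem corollary16 (R : realType) (M M' : 'M[int]_2) :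
  GL2Z M -> GL2Z M' -> hyperbolic M -> hyperbolic M' ->
  (forall m : nat, (0 < m)%N -> fixcount R M m = fixcount R M' m) ->
  (forall t : R, zeta R M t = zeta R M' t) /\
  \det M' = \det M /\
  (\tr M' = \tr M \/ (\tr M' = - \tr M /\ \det M = -1)).
Proof.
move=> glM glM' hypM hypM' eq_count; split; first exact: eq_zeta.
have dtM := GL2Z_hyperbolic_det_tr glM hypM.
have dtM' := GL2Z_hyperbolic_det_tr glM' hypM'.
apply: (hyperbolic_det_tr_inj dtM dtM').
  by rewrite -(fixcount1_mx2 R dtM) -(fixcount1_mx2 R dtM') eq_count.
by rewrite -(fixcount2_mx2 R dtM) -(fixcount2_mx2 R dtM') eq_count.
Qed.
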